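(* Let $K$ be an admissible kernel on $X\times Y$ with constant $C_K$. Then $U_K^{m_Y}(x)=C_K$ for every $x\in X$.
   Context: $(X,d_X)$ and $(Y,d_Y)$ are compact metric spaces and $G$ is a compact topological group acting isometrically and transitively on both $X$ and $Y$. $m_X$ and $m_Y$ denote the unique $G$-invariant Radon (Borel) probability measures on $X$ and $Y$. A Borel measurable $K:X\times Y\to\mathbb{R}\cup\{-\infty\}$ is an admissible kernel if: (i) there is $B_K\in[0,\infty)$ with $-\infty\le K(x,y)\le B_K$ for all $x,y$; (ii) $\int_X|K(x,y)|\,dm_X(x)<\infty$ for every $y\in Y$; (iii) for every $y$, $K(\cdot,y)$ is upper semi-continuous; (iv) $K(g(x),y)=K(x,g^{-1}(y))$ for all $g\in G,x\in X,y\in Y$. The constant $C_K$ is the common value of $\int_X K(x,y)\,dm_X(x)$, which does not depend on $y\in Y$. For a Borel probability measure $\mu$ on $Y$, $U_K^\mu(x)=\int_Y K(x,y)\,d\mu(y)$. *)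

From HB Require Import structures.
From mathcomp Require Import all_boot all_order all_algebra.
From mathcomp Require Import all_classical all_reals all_analysis.
From mathcomp Require Import measurable_realfun.
Set Implicit Arguments. Unset Strict Implicit. Unset Printing Implicit Defensive.
Import Order.TTheory GRing.Theory Num.Theory.
Import numFieldNormedType.Exports.
Local Open Scope classical_set_scope.
Local Open Scope ring_scope.

(** Metric spaces with a distinguished point (the measurable-type structure
    of MathComp-Analysis requires a pointed carrier). *)
#[short(type="pointedMetricType")]
HB.structure Definition PointedMetric (K : numDomainType) :=
  { M of Metric K M & isPointed M }.

Notation BorelT T := (g_sigma_algebraType (@open T)).

Definition compact_topological_group (G : topologicalType)
    (mul : G -> G -> G) (inv : G -> G) (one : G) : Prop :=
  [/\ associative mul, left_id one mul, left_inverse one inv mul,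
      continuous (fun p : G * G => mul p.1 p.2) /\ continuous inv
    & compact [set: G]].

Definition isometric_transitive_action (R : realType) (G : Type)
    (mul : G -> G -> G) (one : G) (X : metricType R) (act : G -> X -> X) :
    Prop :=
  [/\ forall x, act one x = x,
      forall g h x, act (mul g h) x = act g (act h x),
      forall g x x', mdist (act g x) (act g x') = mdist x x'
    & forall x x', exists g, act g x = x'].

(** [m] is a [G]-invariant (Borel) measure on [X]:  m (g A) = m A, written
    equivalently as m (g^{-1}-preimage) for all g. *)
Definition G_invariant (R : realType) (G : Type) (X : ptopologicalType)
    (act : G -> X -> X) (m : set (BorelT X) -> \bar R) : Prop :=
  forall g (A : set (BorelT X)), measurable A -> m (act g @^-1` A) = m A.

Definition upper_semicontinuous_e (R : realType) (X : ptopologicalType)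
    (f : X -> \bar R) : Prop :=
  forall (x : X) (a : \bar R), (f x < a)%E -> \forall z \near x, (f z < a)%E.

(** Admissible kernel (conditions (i)-(iv) of the paper, plus Borel
    measurability of [K] on [X x Y]). *)
Definition admissible_kernel (R : realType) (G : Type) (inv : G -> G)
    (X Y : ptopologicalType) (actX : G -> X -> X) (actY : G -> Y -> Y)
    (mX : set (BorelT X) -> \bar R) (K : X -> Y -> \bar R) : Prop :=
  [/\ measurable_fun [set: BorelT X * BorelT Y]
        (fun p : BorelT X * BorelT Y => K p.1 p.2),
      exists BK : R, 0 <= BK /\ forall x y, (K x y <= BK%:E)%E,
      forall y, (\int[mX]_(x in [set: BorelT X]) `|K x y| < +oo)%E,
      forall y, upper_semicontinuous_e (fun x => K x y)
    & forall g x y, K (actX g x) y = K x (actY (inv g) y)].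

Definition potential (R : realType) (X Y : ptopologicalType)
    (K : X -> Y -> \bar R) (mu : set (BorelT Y) -> \bar R) (x : X) : \bar R :=
  (\int[mu]_(y in [set: BorelT Y]) K x y)%E.

From HB Require Import structures.
From mathcomp Require Import all_boot all_order all_algebra.
From mathcomp Require Import all_classical all_reals all_analysis.
From mathcomp Require Import measurable_realfun.
Import Order.TTheory GRing.Theory Num.Theory.
Import numFieldNormedType.Exports.
Set Implicit Arguments.
Unset Strict Implicit.
Local Open Scope classical_set_scope.
Local Open Scope ring_scope.

(** Since [K (g x) y = K x (g^-1 y)] and [mY] is invariant, the potential
    [x |-> \int K x y dmY(y)] is invariant under [G], hence constant by
    transitivity; symmetrically [y |-> \int K x y dmX(x)] is constant.  These
    are the two sections of [K] on [mX \x mY], so Fubini identifies the two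
    constants.  Integrability of [K] on the product follows in the same way
    from the invariance of [y |-> \int |K x y| dmX(x)] and condition (ii). *)

Lemma invgK_left (G : Type) (mul : G -> G -> G) (inv : G -> G) (one : G) :
  associative mul -> left_id one mul -> left_inverse one inv mul ->
  involutive inv.
Proof.
move=> mulA mul1g mulVg.
have mulgV g : mul g (inv g) = one.
  rewrite -[mul g (inv g)]mul1g -(mulVg (inv g)) -mulA.
  by rewrite [mul (inv g) (mul g (inv g))]mulA mulVg mul1g mulVg.
have mulg1 g : mul g one = g by rewrite -(mulVg g) mulA mulgV mul1g.
by move=> g; rewrite -[RHS]mul1g -(mulVg (inv g)) -mulA mulVg mulg1.
Qed.

Lemma isometry_continuous (R : realType) (X : metricType R) (f : X -> X) :
  (forall x x', mdist (f x) (f x') = mdist x x') -> continuous f.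
Proof.
move=> iso x; apply/cvg_ballP => e e0; near=> z.
have : ball x e z by near: z; exact: nbhsx_ballx.
by rewrite /= !ballEmdist /= iso.
Unshelve. all: by end_near.
Qed.

Lemma continuous_Borel_measurable (T : ptopologicalType) (f : T -> T) :
  continuous f -> measurable_fun [set: BorelT T] (f : BorelT T -> BorelT T).
Proof.
move=> cf.
apply: (@measurability _ _ (BorelT T) (BorelT T) _ _ (@open T)) => //.
move=> _ [A oA <-].
by rewrite setTI; apply: sub_sigma_algebra; apply: open_comp => // y _.
Qed.

Lemma integral_measure_preserving (R : realType) d (T : measurableType d)
    (m : {measure set T -> \bar R}) (phi : T -> T) (f : T -> \bar R) :
  measurable_fun setT phi ->
  (forall A, measurable A -> m (phi @^-1` A) = m A) ->
  measurable_fun setT f ->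
  (\int[m]_x f (phi x) = \int[m]_x f x)%E.
Proof.
move=> mphi mpres mf.
have ge0_preserving g : measurable_fun setT g -> (forall x, 0 <= g x)%E ->
    (\int[m]_x g (phi x) = \int[m]_x g x)%E.
  move=> mg g0; rewrite [RHS](eq_measure_integral (pushforward m phi)).
    by rewrite (ge0_integral_pushforward mphi).
  by move=> A mA _; rewrite /pushforward /= -mpres.
rewrite integralE [RHS]integralE; congr (_ - _)%E.
- rewrite -(ge0_preserving f^\+%E) //; last exact: measurable_funepos.
  by apply: eq_integral => x _; rewrite funepos_comp.
- rewrite -(ge0_preserving f^\-%E) //; last exact: measurable_funeneg.
  by apply: eq_integral => x _; rewrite funeneg_comp.
Qed.

Lemma probability_integral_cst (R : realType) d (T : measurableType d)
    (P : probability T R) (c : \bar R) :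
  (\int[P]_(x in [set: T]) c = c)%E.
Proof.
rewrite integral_cst // -[RHS]mule1; congr (c * _)%E.
exact: probability_setT.
Qed.

Lemma Fubini_constant_sections (R : realType) d1 d2
    (T1 : measurableType d1) (T2 : measurableType d2)
    (P1 : probability T1 R) (P2 : probability T2 R)
    (f : T1 * T2 -> \bar R) (c1 c2 : \bar R) :
  (P1 \x P2)%E.-integrable setT f ->
  (forall x, \int[P2]_y f (x, y) = c1)%E ->
  (forall y, \int[P1]_x f (x, y) = c2)%E ->
  c1 = c2.
Proof.
move=> intf sec1 sec2.
have := Fubini intf.
rewrite (eq_integral (fun _ => c1)) => [|x _]; last exact: sec1.
rewrite [X in _ = X](eq_integral (fun _ => c2)) => [|y _]; last exact: sec2.
by rewrite !probability_integral_cst.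
Qed.

Section invariant_kernel.
Variables (R : realType) (X Y : pointedMetricType R) (G : Type).
Variables (inv : G -> G) (actX : G -> X -> X) (actY : G -> Y -> Y).
Variables (mX : probability (BorelT X) R) (mY : probability (BorelT Y) R).
Variable K : X -> Y -> \bar R.

Hypothesis invK : involutive inv.
Hypothesis isoX : forall g x x', mdist (actX g x) (actX g x') = mdist x x'.
Hypothesis isoY : forall g y y', mdist (actY g y) (actY g y') = mdist y y'.
Hypothesis transX : forall x x', exists g, actX g x = x'.
Hypothesis transY : forall y y', exists g, actY g y = y'.
Hypothesis invX : G_invariant actX mX.
Hypothesis invY : G_invariant actY mY.
Hypothesis mK : measurable_fun [set: BorelT X * BorelT Y]
  (fun p : BorelT X * BorelT Y => K p.1 p.2).
Hypothesis K_act : forall g x y, K (actX g x) y = K x (actY (inv g) y).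

Lemma potential_constant x x' : potential K mY x = potential K mY x'.
Proof.
have [g <-] := transX x' x; rewrite /potential.
under eq_integral do rewrite K_act.
apply: (@integral_measure_preserving _ _ _ mY (actY (inv g))) => [|A mA|].
- exact: continuous_Borel_measurable (isometry_continuous (isoY _)).
- exact: invY.
- exact: (measurable_fun_pair2 (T1 := BorelT X) _ mK).
Qed.

Lemma kernel_column_integral_constant (F : \bar R -> \bar R) y y' :
  measurable_fun setT F ->
  (\int[mX]_x F (K x y) = \int[mX]_x F (K x y'))%E.
Proof.
move=> mF; have [g <-] := transY y' y.
transitivity (\int[mX]_x F (K (actX (inv g) x) y'))%E.
  by apply: eq_integral => x _; rewrite K_act invK.
apply: (@integral_measure_preserving _ _ _ mX (actX (inv g))) => [|A mA|].
- exact: continuous_Borel_measurable (isometry_continuous (isoX _)).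
- exact: invX.
- exact: measurableT_comp mF (measurable_fun_pair1 (T2 := BorelT Y) _ mK).
Qed.

Lemma kernel_product_integrable y0 :
  (\int[mX]_x `|K x y0| < +oo)%E ->
  (mX \x mY)%E.-integrable setT (fun p : BorelT X * BorelT Y => K p.1 p.2).
Proof.
move=> intK; apply/(integrable21ltyP _ _ mK).
rewrite (eq_integral (fun _ => \int[mX]_x `|K x y0|)%E) => [|y _].
  by rewrite probability_integral_cst.
exact: (kernel_column_integral_constant y y0 (@abse_measurable R setT)).
Qed.

End invariant_kernel.

Theorem lemma4p5 (R : realType) (X Y : pointedMetricType R)
    (G : topologicalType) (mul : G -> G -> G) (inv : G -> G) (one : G)
    (actX : G -> X -> X) (actY : G -> Y -> Y)
    (mX : probability (BorelT X) R) (mY : probability (BorelT Y) R)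
    (K : X -> Y -> \bar R) :
  compact [set: X] -> compact [set: Y] ->
  compact_topological_group mul inv one ->
  isometric_transitive_action mul one actX ->
  isometric_transitive_action mul one actY ->
  G_invariant actX mX -> G_invariant actY mY ->
  admissible_kernel inv actX actY mX K ->
  forall (x : X) (y0 : Y),
    potential K mY x = (\int[mX]_(x' in [set: BorelT X]) K x' y0)%E.
Proof.
move=> _ _ [mulA mul1g mulVg _ _] [_ _ isoX transX] [_ _ isoY transY]
  invX invY [mK _ intK _ K_act] x y0.
have invK := invgK_left mulA mul1g mulVg.
have intK_prod := kernel_product_integrable mY invK isoX transY invX mK K_act
  (intK y0).
apply: (Fubini_constant_sections intK_prod) => [x'|y].
- exact: (potential_constant isoY transX invY mK K_act x' x).
- exact: (kernel_column_integral_constant invK isoX transY invX mK K_act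
    y y0 (@measurable_id _ _ setT)).
Qed.
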